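(* Let $n\ge1$, let $f(x)=\sum_{i=0}^{n-1}a_ix^i$ and $g(x)=\sum_{i=0}^{n-1}b_ix^i$ be polynomials over $\mathbb{R}$, and let $\mathfrak{h}=f(\mathfrak{r})+\mathfrak{s}g(\mathfrak{r})\in\mathbb{R}[D_{2n}]$. Then the eigenvalues of the matrix $A(\mathfrak{h})A(\mathfrak{h})^T$ are $(|f(\xi^i)|\pm|g(\xi^i)|)^2$ for $i=0,1,\dots,n-1$, where $\xi=e^{2\pi\sqrt{-1}/n}$ and $|\cdot|$ is the complex absolute value. Consequently $|\mathfrak{h}|_{\rm Mat}\le\max\{|f(\xi^i)|+|g(\xi^i)| : i=0,1,\dots,n-1\}$.
   Context: $D_{2n}$ is the dihedral group of order $2n$ generated by $\mathfrak{r},\mathfrak{s}$ with $\mathfrak{r}^n=\mathfrak{s}^2=1$, $\mathfrak{s}\mathfrak{r}\mathfrak{s}=\mathfrak{r}^{-1}$. The group ring $\mathbb{R}[D_{2n}]$ is identified with $\mathbb{R}^{2n}$ via the basis of group elements (coefficient embedding). For $\mathfrak{h}\in\mathbb{R}[D_{2n}]$, $A(\mathfrak{h})$ is the $2n\times2n$ real matrix of the linear map $x\mapsto\mathfrak{h}x$ on $\mathbb{R}[D_{2n}]$ (the regular representation applied to $\mathfrak{h}$). The matrix norm is $|\mathfrak{h}|_{\rm Mat}=\sqrt{\text{largest eigenvalue of }A(\mathfrak{h})A(\mathfrak{h})^T}$. *)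

From HB Require Import structures.
From mathcomp Require Import all_boot all_order all_algebra.
From mathcomp Require Import classical_sets reals trigo.
From mathcomp.real_closed Require Import complex.
Set Implicit Arguments. Unset Strict Implicit. Unset Printing Implicit Defensive.
Import Order.TTheory GRing.Theory Num.Theory.
Local Open Scope ring_scope.

(* The dihedral group D_{2n}: the element (e, j) stands for s^e r^j,
   e : bool, j : 'I_n.  All 2n elements are distinct. *)
Definition Dn (n : nat) : finType := (bool * 'I_n)%type.

Lemma ord_n_gt0 n (j : 'I_n) : (0 < n)%N.
Proof. exact: leq_ltn_trans (leq0n j) (ltn_ord j). Qed.

(* Product:  s^e1 r^j1 * s^e2 r^j2 = s^(e1+e2) r^(+-j1 + j2)
   (using r^j s = s r^-j), exponent of r taken mod n. *)
Definition dmul n (x y : Dn n) : Dn n :=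
  (xorb x.1 y.1,
   Ordinal (ltn_pmod ((if y.1 then n - x.2 else x.2) + y.2)%N
                     (ord_n_gt0 x.2))).

(* The group ring R[D_{2n}], elements = coefficient functions D_{2n} -> R
   (coefficient embedding). *)
Definition grmul (R : pzRingType) n (u v : Dn n -> R) : Dn n -> R :=
  fun z => \sum_(x : Dn n) \sum_(y : Dn n) u x * v y * (dmul x y == z)%:R.

Definition gbasis (R : pzRingType) n (g : Dn n) : Dn n -> R :=
  fun z => (z == g)%:R.

(* A(h): the matrix of x |-> h x in the basis of group elements (enumerated
   via enum_val); column l holds the coordinates of h * (l-th basis elt). *)
Definition Amat (R : pzRingType) n (h : Dn n -> R) : 'M[R]_#|Dn n| :=
  \matrix_(k, l) grmul h (gbasis R (enum_val l)) (enum_val k).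

Definition mat_norm (R : realType) n (h : Dn n -> R) : R :=
  Num.sqrt (sup [set x : R | eigenvalue (Amat h *m (Amat h)^T) x]).

(* h = f(r) + s g(r) with f = sum a_i x^i, g = sum b_i x^i. *)
Definition hcoef (R : pzRingType) n (a b : 'I_n -> R) : Dn n -> R :=
  fun x => if x.1 then b x.2 else a x.2.

Definition xi (R : realType) (n : nat) : R[i] :=
  (cos (2 * pi / n%:R) +i* sin (2 * pi / n%:R))%C.

Definition peval (R : realType) n (a : 'I_n -> R) (z : R[i]) : R[i] :=
  \sum_(k < n) (a k)%:C%C * z ^+ k.

Definition absev (R : realType) n (a : 'I_n -> R) (i : nat) : R :=
  Normc.normc (peval a (xi R n ^+ i)).

From HB Require Import structures.
From mathcomp Require Import all_boot all_order all_algebra.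
From mathcomp Require Import classical_sets reals trigo.
From mathcomp.real_closed Require Import complex.
From mathcomp Require Import ring lra.
Import Order.TTheory GRing.Theory Num.Theory.
Local Open Scope ring_scope.

Set Implicit Arguments. Unset Strict Implicit. Unset Printing Implicit Defensive.

(* For an n-th root of unity w, the functions s^e r^j |-> al_e w^j form a plane
   that is invariant under A(h) and A(h)^T.  With F = f(w) and G = g(w), the
   matrix A(h) A(h)^T acts on it by [[|F|^2 + |G|^2, 2 conj(F) G],
   [2 F conj(G), |F|^2 + |G|^2]], whose eigenvalues are (|F| +- |G|)^2, with
   eigenvectors (1, +-phase (F conj(G))).  For w = xi^i, i < n, these 2n
   eigenvectors of the complexified matrix are pairwise orthogonal (characters
   of the cyclic group are orthogonal), so they diagonalize it; this gives the
   characteristic polynomial, and every eigenvalue is then at most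
   max_i (|f(xi^i)| + |g(xi^i)|)^2. *)

Section RootsOfUnity.
Variable R : realType.

Lemma expr_cis (t : R) k :
  (cos t +i* sin t)%C ^+ k = (cos (t *+ k) +i* sin (t *+ k))%C.
Proof.
elim: k => [|k IH]; first by rewrite expr0 mulr0n cos0 sin0.
rewrite exprS IH mulrS cosD sinD /=.
by congr (_ +i* _)%C; rewrite addrC [sin t * _]mulrC.
Qed.

Lemma cos_lt1 (t : R) : 0 < t < pi *+ 2 -> cos t < 1.
Proof.
move=> /andP[t_gt0 t_lt2pi].
have sin_half_gt0 : 0 < sin (t / 2).
  by apply: sin_gt0_pi; rewrite divr_gt0 //= ltr_pdivrMr // mulr_natr.
have -> : t = t / 2 + t / 2 by field.
rewrite cosD -!expr2 cos2sin2; have := exprn_gt0 2 sin_half_gt0; lra.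
Qed.

Lemma xi_prim n : (0 < n)%N -> n.-primitive_root (xi R n).
Proof.
move=> n_gt0; have n0 : n%:R != 0 :> R by rewrite pnatr_eq0 -lt0n.
have xin : xi R n ^+ n = 1.
  by rewrite /xi expr_cis -[_ *+ n]mulr_natr divfK // mulr_natl cos2pi sin2pi.
have [m prim_m m_dvd_n] := prim_order_exists n_gt0 xin.
suff m_eq_n : m = n by rewrite m_eq_n in prim_m.
have m_gt0 := prim_order_gt0 prim_m.
apply/eqP; rewrite eqn_leq dvdn_leq //= leqNgt; apply/negP => m_lt_n.
have /eqP := prim_expr_order prim_m.
rewrite /xi expr_cis eq_complex /= => /andP[/eqP cos1 _].
move/eqP: cos1; apply/negP; rewrite lt_eqF //; apply: cos_lt1.
have pi_gt0 : 0 < pi :> R := pi_gt0 R.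
have mn : m%:R < n%:R :> R by rewrite ltr_nat.
rewrite pmulrn_lgt0 ?divr_gt0 ?mulr_gt0 ?ltr0n //=.
rewrite -[_ *+ m]mulr_natr mulrAC ltr_pdivrMr ?ltr0n // -[pi *+ 2]mulr_natr.
nra.
Qed.

End RootsOfUnity.

Lemma sum_unity_root_expr (F : fieldType) n (w : F) :
  w ^+ n = 1 -> w != 1 -> \sum_(j < n) w ^+ j = 0.
Proof.
move=> wn w_neq1; have /esym/eqP := subrX1 w n.
by rewrite wn subrr mulf_eq0 subr_eq0 (negbTE w_neq1) => /eqP.
Qed.

Lemma unity_root_neq0 (F : fieldType) n (w : F) :
  (0 < n)%N -> w ^+ n = 1 -> w != 0.
Proof.
move=> n_gt0 wn; apply: contra_eq_neq wn => ->.
by rewrite expr0n gtn_eqF // eq_sym oner_eq0.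
Qed.

Lemma sum_natr_eq (K : pzSemiRingType) (T : finType) (c : T) (F : T -> K) :
  \sum_(y : T) (c == y)%:R * F y = F c.
Proof.
rewrite (bigD1 c) //= eqxx mul1r big1 ?addr0 // => y /negbTE.
by rewrite eq_sym => ->; rewrite mul0r.
Qed.

Lemma sum_inj_eq (K : pzSemiRingType) (T : finType) (f : T -> T)
    (f_inj : injective f) (z : T) (F : T -> K) :
  \sum_(y : T) (f y == z)%:R * F y = F (invF f_inj z).
Proof.
rewrite (reindex_inj (can_inj (f_invF f_inj))) /=.
by under eq_bigr do rewrite f_invF eq_sym; exact: sum_natr_eq.
Qed.

Section Phase.
Variable C : numClosedFieldType.
Implicit Types z w : C.

Lemma conj_unity_root n w : (0 < n)%N -> w ^+ n = 1 -> w^* = w^-1.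
Proof.
move=> n_gt0 wn; have w_norm1 : `|w| = 1.
  by apply/eqP; rewrite -(pexpr_eq1 n_gt0) // -normrX wn normr1.
by rewrite invC_norm w_norm1 expr1n invr1 mul1r.
Qed.

Definition phase z : C := if z == 0 then 1 else z / `|z|.

Lemma phaseM_norm z : phase z * `|z| = z.
Proof.
rewrite /phase; case: eqP => [->|/eqP z_neq0]; first by rewrite normr0 mulr0.
by rewrite divfK // normr_eq0.
Qed.

Lemma phaseM_conj z : phase z * z^* = `|z|.
Proof.
rewrite /phase; case: eqP => [->|/eqP z_neq0]; first by rewrite normr0 mul1r conjC0.
by rewrite mulrAC -normCK expr2 mulfK // normr_eq0.
Qed.

Lemma conj_phaseM z : (phase z)^* * phase z = 1.
Proof.
rewrite -normCKC /phase; case: eqP => [_|/eqP z_neq0]; first by rewrite normr1 expr1n.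
by rewrite normf_div normr_id divff ?expr1n // normr_eq0.
Qed.

Lemma phase_eigen (F G : C) (s : bool) :
  let t := (-1) ^+ s * phase (F * G^*) in
  let lambda := (`|F| + (-1) ^+ s * `|G|) ^+ 2 in
  (F + t * G) * F^* + (G^* + t * F^*) * G = lambda /\
  (G^* + t * F^*) * F + (F + t * G) * G^* = lambda * t.
Proof.
rewrite /=; set p := phase _.
have pFG : p * (F^* * G) = `|F| * `|G|.
  by rewrite -[G]conjCK -rmorphM phaseM_conj normrM norm_conjC.
have FG : F * G^* = p * (`|F| * `|G|).
  by rewrite -[`|G|]norm_conjC -normrM phaseM_norm.
split.
- have -> : (F + (-1) ^+ s * p * G) * F^* + (G^* + (-1) ^+ s * p * F^*) * G =
            F * F^* + G * G^* + 2 * (-1) ^+ s * (p * (F^* * G)) by ring.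
  by rewrite -!normCK pFG; case: s => /=; ring.
- have -> : (G^* + (-1) ^+ s * p * F^*) * F + (F + (-1) ^+ s * p * G) * G^* =
            2 * (F * G^*) + (-1) ^+ s * p * (F * F^* + G * G^*) by ring.
  by rewrite -!normCK FG; case: s => /=; ring.
Qed.

End Phase.

Section DihedralGroup.
Variable n : nat.
Implicit Types x y z : Dn n.

Lemma big_Dn T (idx : T) (op : Monoid.com_law idx) (G : Dn n -> T) :
  \big[op/idx]_(x : Dn n) G x = \big[op/idx]_(j < n) op (G (true, j)) (G (false, j)).
Proof.
rewrite big_split /= -(big_bool _ (fun e => \big[op/idx]_(j < n) G (e, j))).
by rewrite (pair_bigA _ (fun e j => G (e, j))); apply: eq_bigr => -[].
Qed.

Lemma dmul_inj x : injective (dmul x).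
Proof.
move=> [e1 j1] [e2 j2] [e12 j12].
have {}e12 : e1 = e2 by move: e12; case: (x.1); case: (e1); case: (e2).
subst e2; move/eqP: j12; rewrite eqn_modDl !modn_small // => /eqP j12.
by congr (_, _); apply: val_inj.
Qed.

Lemma expr_dmul (F : fieldType) (w : F) x y : w ^+ n = 1 ->
  w ^+ (dmul x y).2 = (if y.1 then w^-1 ^+ x.2 else w ^+ x.2) * w ^+ y.2.
Proof.
move=> wn; have w_unit : w \is a GRing.unit.
  by rewrite unitfE (unity_root_neq0 (ord_n_gt0 x.2)).
rewrite /dmul /= expr_mod // exprD; case: (y.1) => //.
by rewrite exprB ?wn ?div1r ?exprVn // ltnW.
Qed.

End DihedralGroup.

Definition Acoef (K : pzRingType) n (h : Dn n -> K) (z y : Dn n) : K :=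
  \sum_(x : Dn n) h x * (dmul x y == z)%:R.

Lemma grmul_gbasis (K : pzRingType) n (h : Dn n -> K) (g z : Dn n) :
  grmul h (gbasis K g) z = Acoef h z g.
Proof.
apply: eq_bigr => x _; rewrite (bigD1 g) //= big1 ?addr0 => [|y /negbTE y_neq].
  by rewrite /gbasis eqxx mulr1.
by rewrite /gbasis y_neq mulr0 mul0r.
Qed.

Lemma map_Amat (K L : pzRingType) (f : {rmorphism K -> L}) n
    (h : Dn n -> K) (h' : Dn n -> L) :
  (forall x, f (h x) = h' x) -> map_mx f (Amat h) = Amat h'.
Proof.
move=> fh; apply/matrixP => k l; rewrite !mxE /grmul rmorph_sum.
apply: eq_bigr => x _; rewrite rmorph_sum; apply: eq_bigr => y _.
by rewrite !rmorphM /gbasis !rmorph_nat fh.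
Qed.

Definition eval_coefs (K : pzSemiRingType) n (a : 'I_n -> K) (w : K) : K :=
  \sum_(k < n) a k * w ^+ k.

Definition charvec (K : pzSemiRingType) n (al0 al1 w : K) (y : Dn n) : K :=
  (if y.1 then al1 else al0) * w ^+ y.2.

Section RegularAction.
Variables (F : fieldType) (n : nat) (a b : 'I_n -> F) (w : F).
Hypothesis wn : w ^+ n = 1.
Implicit Types x y z : Dn n.
Local Notation h := (hcoef a b).
Local Notation f := (eval_coefs a).
Local Notation g := (eval_coefs b).

Lemma charvec_dmul al0 al1 x y :
  charvec al0 al1 w (dmul x y) =
  (if xorb x.1 y.1 then al1 else al0) *
  ((if y.1 then w^-1 ^+ x.2 else w ^+ x.2) * w ^+ y.2).
Proof. by rewrite /charvec expr_dmul. Qed.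

Lemma charvec_ldiv al0 al1 x z :
  charvec al0 al1 w (invF (dmul_inj (x := x)) z) =
  (if xorb x.1 z.1 then al1 else al0) *
  ((if xorb x.1 z.1 then w ^+ x.2 else w^-1 ^+ x.2) * w ^+ z.2).
Proof.
have w_neq0 := unity_root_neq0 (ord_n_gt0 x.2) wn.
set y := invF _ z; rewrite -(f_invF (dmul_inj (x := x)) z) -/y /charvec expr_dmul //.
clearbody y; case: x y => [[] i] [[] j] /=;
  by rewrite exprVn ?mulKf ?mulVKf ?expf_neq0.
Qed.

Lemma Acoef_tr_charvec al0 al1 z :
  \sum_(y : Dn n) Acoef h y z * charvec al0 al1 w y =
  charvec (al0 * f w + al1 * g w) (al0 * g w^-1 + al1 * f w^-1) w z.
Proof.
transitivity (\sum_(x : Dn n) h x * charvec al0 al1 w (dmul x z)).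
  under eq_bigr do rewrite /Acoef mulr_suml.
  rewrite exchange_big; apply: eq_bigr => x _.
  under eq_bigr do rewrite -mulrA.
  by rewrite -mulr_sumr sum_natr_eq.
rewrite big_Dn; under eq_bigr do rewrite !charvec_dmul.
case: z => [[] j] /=; rewrite /hcoef /eval_coefs /charvec /= !mulr_sumr -big_split /=;
  by rewrite mulr_suml; apply: eq_bigr => i _; ring.
Qed.

Lemma Acoef_charvec al0 al1 z :
  \sum_(y : Dn n) Acoef h z y * charvec al0 al1 w y =
  charvec (al0 * f w^-1 + al1 * g w) (al1 * f w + al0 * g w^-1) w z.
Proof.
transitivity (\sum_(x : Dn n) h x * charvec al0 al1 w (invF (dmul_inj (x := x)) z)).
  under eq_bigr do rewrite /Acoef mulr_suml.
  rewrite exchange_big; apply: eq_bigr => x _.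
  under eq_bigr do rewrite -mulrA.
  by rewrite -mulr_sumr (sum_inj_eq (dmul_inj (x := x))).
rewrite big_Dn; under eq_bigr do rewrite !charvec_ldiv.
case: z => [[] j] /=; rewrite /hcoef /eval_coefs /charvec /= !mulr_sumr -big_split /=;
  by rewrite mulr_suml; apply: eq_bigr => i _; ring.
Qed.

End RegularAction.

Lemma charvec_dot (C : numClosedFieldType) n (al0 al1 be0 be1 v w : C) :
  \sum_(y : Dn n) (charvec al0 al1 v y)^* * charvec be0 be1 w y =
  (al0^* * be0 + al1^* * be1) * \sum_(j < n) (v^* * w) ^+ j.
Proof.
rewrite big_Dn mulr_sumr; apply: eq_bigr => j _.
by rewrite /charvec /= !rmorphM !rmorphXn exprMn; ring.
Qed.

Lemma char_poly_similar (F : fieldType) m (M D P : 'M[F]_m) :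
  P \in unitmx -> M *m P = P *m D -> char_poly M = char_poly D.
Proof.
move=> P_unit MP_PD; rewrite /char_poly /char_poly_mx.
have detP : \det (map_mx polyC P) != 0.
  by rewrite det_map_mx polyC_eq0 -unitfE -unitmxE.
apply: (mulIf detP); rewrite -det_mulmx [RHS]mulrC -det_mulmx; congr (\det _).
by rewrite mulmxBl mulmxBr scalar_mxC -!map_mxM MP_PD.
Qed.

Lemma char_poly_diag (K : comNzRingType) m (d : 'rV[K]_m) :
  char_poly (diag_mx d) = \prod_(i < m) ('X - (d 0 i)%:P).
Proof.
rewrite char_poly_trig ?diag_mx_is_trig //.
by apply: eq_bigr => i _; rewrite mxE eqxx mulr1n.
Qed.

Section ComplexEigenvectors.
Variables (R : realType) (n : nat) (a b : 'I_n -> R).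
Local Notation hC := (hcoef (fun k => (a k)%:C%C) (fun k => (b k)%:C%C)).
Local Notation omega c := (xi R n ^+ (c : Dn n).2).

Lemma conj_peval (p : 'I_n -> R) (z : R[i]) : (peval p z)^* = peval p z^*.
Proof.
rewrite /peval rmorph_sum; apply: eq_bigr => j _.
by rewrite rmorphM rmorphXn /= -[((p j)%:C)%C^*]/(((p j)%:C)^*)%C conjc_real.
Qed.

Lemma omega_unity (c : Dn n) : omega c ^+ n = 1.
Proof. by rewrite exprAC (prim_expr_order (@xi_prim R _ (ord_n_gt0 c.2))) expr1n. Qed.

Lemma omega_neq0 (c : Dn n) : omega c != 0.
Proof. exact: unity_root_neq0 (ord_n_gt0 c.2) (omega_unity c). Qed.

Lemma conj_omega (c : Dn n) : (omega c)^* = (omega c)^-1.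
Proof. exact: conj_unity_root (ord_n_gt0 c.2) (omega_unity c). Qed.

Definition eigvec (c : Dn n) : Dn n -> R[i] :=
  charvec 1 ((-1) ^+ c.1 * phase (peval a (omega c) * (peval b (omega c))^*)) (omega c).

Definition eigval (c : Dn n) : R :=
  (absev a c.2 + (-1) ^+ c.1 * absev b c.2) ^+ 2.

Lemma eigvec_eigen c z :
  \sum_(u : Dn n) Acoef hC z u * \sum_(v : Dn n) Acoef hC v u * eigvec c v =
  (eigval c)%:C%C * eigvec c z.
Proof.
have wn := omega_unity c.
under eq_bigr do rewrite Acoef_tr_charvec //.
rewrite Acoef_charvec // -conj_omega.
have fconj (p : 'I_n -> R) :
    eval_coefs (fun k => (p k)%:C%C) (omega c)^* = (peval p (omega c))^*.
  by rewrite conj_peval.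
rewrite !fconj !mul1r.
have [-> ->] := phase_eigen (peval a (omega c)) (peval b (omega c)) c.1.
have normcE (u : R[i]) : `|u| = (Normc.normc u)%:C%C by case: u => x y; rewrite normc_def.
rewrite /eigval /absev rmorphXn rmorphD rmorphM rmorph_sign !normcE.
by rewrite /eigvec /charvec; case: (z.1); rewrite !mulrA ?mulr1.
Qed.

Lemma eigvec_dot c d :
  \sum_(y : Dn n) (eigvec c y)^* * eigvec d y = (c == d)%:R * (2 * n)%:R.
Proof.
rewrite charvec_dot conjC1 !mul1r.
have [c2d2|c2d2] := eqVneq c.2 d.2.
  rewrite -c2d2 conj_omega mulVf ?omega_neq0 //.
  under eq_bigr do rewrite expr1n.
  rewrite sumr_const card_ord rmorphM rmorph_sign mulrACA conj_phaseM mulr1 -signr_addb.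
  by case: c d c2d2 => [[] i] [[] j] /= ij; subst j; rewrite ?eqxx /= natrM; ring.
have -> : (c == d) = false by apply: contraNF c2d2 => /eqP ->.
have prim := @xi_prim R _ (ord_n_gt0 c.2).
rewrite mul0r sum_unity_root_expr ?mulr0 //.
  by rewrite exprMn -rmorphXn !omega_unity rmorph1 mulr1.
rewrite conj_omega; apply: contra c2d2 => /eqP cd_eq1.
have : omega d = omega c.
  by rewrite -(mulVKf (omega_neq0 c) (omega d)) cd_eq1 mulr1.
by move/eqP; rewrite (eq_prim_root_expr prim) !modn_small // eq_sym.
Qed.

Definition eigmx : 'M[R[i]]_#|Dn n| :=
  \matrix_(k, l) eigvec (enum_val l) (enum_val k).

Lemma eigmx_unit : eigmx \in unitmx.
Proof.
suff inv : ((2 * n)%:R^-1 *: (map_mx Num.conj eigmx)^T) *m eigmx = 1%:M.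
  by case: (mulmx1_unit inv).
apply/matrixP => k l; rewrite !mxE.
under eq_bigr do rewrite !mxE -mulrA.
rewrite -mulr_sumr -(big_enum_val (fun y => (eigvec _ y)^* * eigvec _ y)) /=.
rewrite eigvec_dot (inj_eq enum_val_inj) mulrCA mulVf ?mulr1 //.
by rewrite pnatr_eq0 muln_eq0 negb_or -!lt0n (ord_n_gt0 (enum_val k).2).
Qed.

Lemma mulmx_eigmx :
  Amat hC *m (Amat hC)^T *m eigmx =
  eigmx *m diag_mx (\row_l (eigval (enum_val l))%:C%C).
Proof.
apply/matrixP => k l; rewrite -mulmxA mul_mx_diag !mxE.
under eq_bigr do rewrite !mxE.
under eq_bigr do under eq_bigr do rewrite !mxE !grmul_gbasis.
under eq_bigr do rewrite grmul_gbasis.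
rewrite -(big_enum_val (fun u => Acoef hC (enum_val k) u *
  \sum_(j < #|Dn n|) Acoef hC (enum_val j) u * eigvec (enum_val l) (enum_val j))) /=.
under eq_bigr do rewrite -(big_enum_val (fun v => Acoef hC v _ * eigvec _ v)) /=.
by rewrite eigvec_eigen mulrC.
Qed.

Lemma char_poly_complexified :
  char_poly (Amat hC *m (Amat hC)^T) = \prod_(c : Dn n) ('X - ((eigval c)%:C%C)%:P).
Proof.
rewrite (char_poly_similar eigmx_unit mulmx_eigmx) char_poly_diag.
transitivity (\prod_(i < #|Dn n|) ('X - ((eigval (enum_val i))%:C%C)%:P)).
  by apply: eq_bigr => i _; rewrite mxE.
by rewrite -(big_enum_val (fun c => 'X - ((eigval c)%:C%C)%:P)).
Qed.

End ComplexEigenvectors.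

Lemma char_poly_AAT (R : realType) n (a b : 'I_n -> R) :
  let h := hcoef a b in
  char_poly (Amat h *m (Amat h)^T) =
    \prod_(i < n) (('X - ((absev a i + absev b i) ^+ 2)%:P) *
                   ('X - ((absev a i - absev b i) ^+ 2)%:P)).
Proof.
move=> h; apply: (@map_poly_inj _ _ (real_complex R)).
rewrite map_char_poly map_mxM -map_trmx.
rewrite (map_Amat (h' := hcoef (fun k => (a k)%:C%C) (fun k => (b k)%:C%C))); last first.
  by case=> [[]].
rewrite char_poly_complexified big_Dn rmorph_prod; apply: eq_bigr => i _.
rewrite /= [RHS]rmorphM /= !map_polyXsubC /eigval /= expr1 expr0 mulN1r mul1r mulrC.
by rewrite !rmorphXn /= !rmorphD /= rmorphN.
Qed.

Lemma root_prod_XsubC2 (F : idomainType) n (p q : 'I_n -> F) x :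
  root (\prod_(i < n) (('X - (p i)%:P) * ('X - (q i)%:P))) x =
  [exists i, (x == p i) || (x == q i)].
Proof.
rewrite /root horner_prod; apply/prodf_eq0/existsP.
  by case=> i _; rewrite hornerM !hornerXsubC mulf_eq0 !subr_eq0 => ?; exists i.
by case=> i; exists i; rewrite // hornerM !hornerXsubC mulf_eq0 !subr_eq0.
Qed.

Lemma sqrt_sup_le (R : realType) (S : set R) (c : R) :
  (S !=set0)%classic -> 0 <= c -> (forall x, S x -> x <= c ^+ 2) -> Num.sqrt (sup S) <= c.
Proof.
move=> S_neq0 c_ge0 S_le; rewrite -(ger0_norm c_ge0) -sqrtr_sqr.
exact/ler_wsqrtr/ge_sup.
Qed.

Lemma absev_ge0 (R : realType) n (a : 'I_n -> R) i : 0 <= absev a i.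
Proof. by rewrite /absev /Normc.normc; case: (peval _ _) => x y; exact: sqrtr_ge0. Qed.

Theorem lemma2 (R : realType) (n : nat) (a b : 'I_n -> R) :
  (0 < n)%N ->
  let h := hcoef a b in
  let M := Amat h *m (Amat h)^T in
  char_poly M =
    \prod_(i < n)
      (('X - ((absev a i + absev b i) ^+ 2)%:P) *
       ('X - ((absev a i - absev b i) ^+ 2)%:P))
  /\ mat_norm h <= \big[Num.max/0]_(i < n) (absev a i + absev b i).
Proof.
move=> n_gt0 h M.
have charM : char_poly M = _ := char_poly_AAT a b.
split=> //; set m := \big[Num.max/0]_(i < n) _.
have eigM x : eigenvalue M x = [exists i : 'I_n,
    (x == (absev a i + absev b i) ^+ 2) || (x == (absev a i - absev b i) ^+ 2)].
  by rewrite eigenvalue_root_char charM root_prod_XsubC2.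
apply: sqrt_sup_le.
- exists ((absev a (Ordinal n_gt0) + absev b (Ordinal n_gt0)) ^+ 2).
  by rewrite /= eigM; apply/existsP; exists (Ordinal n_gt0); rewrite eqxx.
- exact: bigmax_ge_id.
move=> x; rewrite /= eigM => /existsP[i /orP[] /eqP ->];
  have : absev a i + absev b i <= m by rewrite /m (bigD1 i) //= le_max lexx.
all: by have := absev_ge0 a i; have := absev_ge0 b i; nra.
Qed.
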